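(* Let $\mathscr C$ be an embedded circle pattern for a graph $G$ and an admissible labelling $\alpha:E(G)\to[\alpha_0,\pi)$ with $0<\alpha_0\le\pi/2$, with radius function $r$. Define conductances $\mu([v_0,v_1])=\frac{\sin\alpha([v_0,v_1])}{\cosh(\log r(v_1)-\log r(v_0))-\cos\alpha([v_0,v_1])}$. Then there is a constant $C_5=C_5(\alpha_0)$ such that $\sum_{e=[v,w]}\mu(e)\le C_5$ for all interior vertices $v\in V$, the sum being over all edges incident to $v$.
   Context: $G$ is the graph on the white vertices of a b-quad-graph (a strongly regular cell decomposition into quadrilaterals with bipartite 1-skeleton), adjacent iff incident to a common face. Admissible labelling: at each interior black vertex the labels of incident faces sum to $2\pi$. A circle pattern: circles $\mathscr C(v)$ of radius $r(v)$ such that circles of adjacent vertices intersect with exterior intersection angle $\alpha$ (angle at an intersection point between the radii to the two centers), together with equally oriented kites formed by the two centers and the two intersection points, locally isomorphic to the b-quad-graph at interior vertices; embedded means the kites have disjoint interiors and meet in an edge/vertex iff the corresponding faces do. (The conductance equals the ratio of the distance between the two intersection points to the distance between the two centers.) *)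

From Stdlib Require Import Reals List.
Open Scope R_scope.

Inductive corner : Set := c0 | c1 | c2 | c3.
Definition csucc (c : corner) : corner :=
  match c with c0 => c1 | c1 => c2 | c2 => c3 | c3 => c0 end.
Definition cpred (c : corner) : corner :=
  match c with c0 => c3 | c1 => c0 | c2 => c1 | c3 => c2 end.

(* A b-quad-graph is given by a vertex type V with a colouring
   [white : V -> bool] and a face type F; face [f] has boundary cycle
   [fv f c0, fv f c1, fv f c2, fv f c3] (positively oriented), with
   [fv f c0], [fv f c2] white and [fv f c1], [fv f c3] black. *)

Definition in_face {V F : Type} (fv : F -> corner -> V) (f : F) (x : V) : Prop :=
  exists i, fv f i = x.

Definition edge_of {V F : Type} (fv : F -> corner -> V) (f : F) (x y : V) : Prop :=
  exists i, (fv f i = x /\ fv f (csucc i) = y) \/ (fv f i = y /\ fv f (csucc i) = x).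

Definition is_bquad_graph {V F : Type} (white : V -> bool)
    (fv : F -> corner -> V) : Prop :=
  (forall f, white (fv f c0) = true /\ white (fv f c2) = true /\
             white (fv f c1) = false /\ white (fv f c3) = false) /\
  (forall f i j, fv f i = fv f j -> i = j) /\
  (* coherent orientation: a directed edge is traversed by at most one face *)
  (forall f g i j, fv f i = fv g j -> fv f (csucc i) = fv g (csucc j) -> f = g) /\
  (* strong regularity: two distinct faces meet in nothing, a vertex or an edge *)
  (forall f g x y, f <> g -> in_face fv f x -> in_face fv g x ->
     in_face fv f y -> in_face fv g y -> x <> y ->
     edge_of fv f x y /\ edge_of fv g x y).

(* [star fv x fs ys]: x is an interior vertex; [fs] lists (without repetition)
   all the faces incident to x in cyclic order, and [ys] the neighbours of x
   in the b-quad-graph, face [fs_k] being (x, ys_k, _, ys_(k+1)) in its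
   positive cyclic order. *)
Definition star {V F : Type} (fv : F -> corner -> V) (x : V)
    (fs : list F) (ys : list V) : Prop :=
  (1 <= length fs)%nat /\ length ys = length fs /\ NoDup fs /\ NoDup ys /\
  (forall f, in_face fv f x -> In f fs) /\
  (forall k f, nth_error fs k = Some f ->
     exists i, fv f i = x /\
       nth_error ys k = Some (fv f (csucc i)) /\
       nth_error ys ((k + 1) mod length fs) = Some (fv f (cpred i))).

Definition interior_vertex {V F : Type} (fv : F -> corner -> V) (x : V) : Prop :=
  exists fs ys, star fv x fs ys.

Definition pt : Type := (R * R)%type.
Definition psub (a b : pt) : pt := (fst a - fst b, snd a - snd b).
Definition dot (a b : pt) : R := fst a * fst b + snd a * snd b.
Definition dist2 (a b : pt) : R := dot (psub a b) (psub a b).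
(* twice the signed area of the triangle (a,b,c) *)
Definition orient (a b c : pt) : R :=
  (fst b - fst a) * (snd c - snd a) - (snd b - snd a) * (fst c - fst a).

Definition closed_tri (a b c z : pt) : Prop :=
  exists l1 l2 l3, 0 <= l1 /\ 0 <= l2 /\ 0 <= l3 /\ l1 + l2 + l3 = 1 /\
    z = (l1 * fst a + l2 * fst b + l3 * fst c, l1 * snd a + l2 * snd b + l3 * snd c).
Definition open_tri (a b c z : pt) : Prop :=
  exists l1 l2 l3, 0 < l1 /\ 0 < l2 /\ 0 < l3 /\ l1 + l2 + l3 = 1 /\
    z = (l1 * fst a + l2 * fst b + l3 * fst c, l1 * snd a + l2 * snd b + l3 * snd c).
Definition closed_seg (a b z : pt) : Prop :=
  exists t, 0 <= t <= 1 /\ z = ((1 - t) * fst a + t * fst b, (1 - t) * snd a + t * snd b).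
Definition open_seg (a b z : pt) : Prop :=
  exists t, 0 < t < 1 /\ z = ((1 - t) * fst a + t * fst b, (1 - t) * snd a + t * snd b).

(* [pos] places white vertices at the circle centres and black vertices at the
   intersection points; [r] is the radius function (on white vertices). *)

(* The kite of face f is the quadrilateral (pos v, pos b, pos w, pos b'),
   i.e. the union of the triangles (v,b,w) and (v,w,b') which lie on opposite
   sides of the diagonal vw. *)
Definition closed_kite {V F : Type} (fv : F -> corner -> V) (pos : V -> pt)
    (f : F) (z : pt) : Prop :=
  closed_tri (pos (fv f c0)) (pos (fv f c1)) (pos (fv f c2)) z \/
  closed_tri (pos (fv f c0)) (pos (fv f c2)) (pos (fv f c3)) z.
Definition open_kite {V F : Type} (fv : F -> corner -> V) (pos : V -> pt)
    (f : F) (z : pt) : Prop :=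
  open_tri (pos (fv f c0)) (pos (fv f c1)) (pos (fv f c2)) z \/
  open_tri (pos (fv f c0)) (pos (fv f c2)) (pos (fv f c3)) z \/
  open_seg (pos (fv f c0)) (pos (fv f c2)) z.

Definition circle_pattern {V F : Type} (white : V -> bool)
    (fv : F -> corner -> V) (alpha : F -> R) (pos : V -> pt) (r : V -> R) : Prop :=
  (forall x, white x = true -> 0 < r x) /\
  (* for each face, the black vertices are intersection points of the circles
     of the two white vertices, with angle alpha between the radii *)
  (forall f b, (b = fv f c1 \/ b = fv f c3) ->
     dist2 (pos b) (pos (fv f c0)) = r (fv f c0) ^ 2 /\
     dist2 (pos b) (pos (fv f c2)) = r (fv f c2) ^ 2 /\
     dot (psub (pos (fv f c0)) (pos b)) (psub (pos (fv f c2)) (pos b))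
       = r (fv f c0) * r (fv f c2) * cos (alpha f)) /\
  (* equally oriented (non-degenerate) kites *)
  (exists s, (s = 1 \/ s = -1) /\
     forall f, 0 < s * orient (pos (fv f c0)) (pos (fv f c1)) (pos (fv f c2)) /\
               0 < s * orient (pos (fv f c0)) (pos (fv f c2)) (pos (fv f c3))).

Definition common_part {V F : Type} (fv : F -> corner -> V) (pos : V -> pt)
    (f g : F) (z : pt) : Prop :=
  (exists i, in_face fv g (fv f i) /\ z = pos (fv f i)) \/
  (exists i, edge_of fv g (fv f i) (fv f (csucc i)) /\
             closed_seg (pos (fv f i)) (pos (fv f (csucc i))) z).

Definition embedded {V F : Type} (fv : F -> corner -> V) (pos : V -> pt) : Prop :=
  forall f g, f <> g ->
    (forall z, ~ (open_kite fv pos f z /\ open_kite fv pos g z)) /\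
    (forall z, (closed_kite fv pos f z /\ closed_kite fv pos g z) <->
               common_part fv pos f g z).

Definition sumR (l : list R) : R := fold_right Rplus 0 l.

Definition admissible {V F : Type} (white : V -> bool) (fv : F -> corner -> V)
    (alpha0 : R) (alpha : F -> R) : Prop :=
  (forall f, alpha0 <= alpha f < PI) /\
  (forall b fs ys, white b = false -> star fv b fs ys ->
     sumR (map alpha fs) = 2 * PI).

(* conductance of the G-edge [fv f c0, fv f c2] corresponding to face f *)
Definition conductance {V F : Type} (fv : F -> corner -> V) (alpha : F -> R)
    (r : V -> R) (f : F) : R :=
  sin (alpha f) /
    (cosh (ln (r (fv f c2)) - ln (r (fv f c0))) - cos (alpha f)).

(* The conductance of the edge of a face f at v is twice the sine of the angle
   theta_f of the kite triangle (v, b, w) at v, times r(v) / |vw|.  The radii to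
   an intersection point meet at an angle alpha(f) >= alpha0, which forces
   |vw| >= r(v) sin alpha0; hence mu(f) <= 2 sin theta_f / sin alpha0.  The kite
   triangles at v have disjoint interiors, so their sines add up to a bounded
   quantity.  Instead of measuring angles we count rays: if v has degree N,
   each triangle is entered by at least N sin theta_f / (2 PI) - 1 of the 2N
   rays from v in the directions 2 PI j / N, and no ray enters two triangles.
   This gives sum sin theta_f <= 6 PI, hence C5 = 12 PI / sin alpha0. *)

From Pilot Require Import Defs.
From Stdlib Require Import Reals List Lra Lia Psatz ClassicalEpsilon.
Open Scope R_scope.

Lemma sumR_app (l1 l2 : list R) : sumR (l1 ++ l2) = sumR l1 + sumR l2.
Proof. induction l1 as [|x l1 IH]; simpl; [ring | rewrite IH; ring]. Qed.

Lemma sumR_le {A : Type} (f g : A -> R) (l : list A) :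
  (forall x, In x l -> f x <= g x) -> sumR (map f l) <= sumR (map g l).
Proof.
  induction l as [|x l IH]; simpl; intros H; [lra|].
  pose proof (H x (or_introl eq_refl)).
  pose proof (IH (fun y Hy => H y (or_intror Hy))). lra.
Qed.

Lemma sumR_add {A : Type} (f g : A -> R) (l : list A) :
  sumR (map (fun x => f x + g x) l) = sumR (map f l) + sumR (map g l).
Proof. induction l as [|x l IH]; simpl; [ring | rewrite IH; ring]. Qed.

Lemma sumR_scal {A : Type} (c : R) (f : A -> R) (l : list A) :
  sumR (map (fun x => c * f x) l) = c * sumR (map f l).
Proof. induction l as [|x l IH]; simpl; [ring | rewrite IH; ring]. Qed.

Lemma sumR_const {A : Type} (c : R) (l : list A) :
  sumR (map (fun _ => c) l) = c * INR (length l).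
Proof.
  induction l as [|x l IH]; [simpl; ring|].
  cbn [map sumR fold_right length]. rewrite S_INR.
  unfold sumR in IH. rewrite IH. ring.
Qed.

Lemma sumR_comm {A B : Type} (g : A -> B -> R) (la : list A) (lb : list B) :
  sumR (map (fun a => sumR (map (g a) lb)) la) =
  sumR (map (fun b => sumR (map (fun a => g a b) la)) lb).
Proof.
  induction la as [|a la IH]; simpl.
  - symmetry. rewrite (sumR_const 0). ring.
  - change (sumR (map (g a) lb) + sumR (map (fun a => sumR (map (g a) lb)) la) =
            sumR (map (fun b => g a b + sumR (map (fun a => g a b) la)) lb)).
    rewrite IH, sumR_add. reflexivity.
Qed.

Definition chi (P : Prop) : R := if excluded_middle_informative P then 1 else 0.

Lemma chi_ge0 (P : Prop) : 0 <= chi P.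
Proof. unfold chi; destruct excluded_middle_informative; lra. Qed.

Lemma chi_true (P : Prop) : P -> chi P = 1.
Proof. unfold chi; destruct excluded_middle_informative; tauto. Qed.

Lemma chi_false (P : Prop) : ~ P -> chi P = 0.
Proof. unfold chi; destruct excluded_middle_informative; tauto. Qed.

Lemma chi_mono (P Q : Prop) : (P -> Q) -> chi P <= chi Q.
Proof.
  intros H. destruct (classic P) as [p|np].
  - rewrite !chi_true by auto. lra.
  - rewrite chi_false by exact np. apply chi_ge0.
Qed.

Lemma sumR_chi_ge0 {A : Type} (P : A -> Prop) (l : list A) :
  0 <= sumR (map (fun x => chi (P x)) l).
Proof.
  rewrite <- (Rmult_0_l (INR (length l))), <- sumR_const.
  apply sumR_le; intros; apply chi_ge0.
Qed.

Lemma sumR_chi_le_1 {A : Type} (P : A -> Prop) (l : list A) : NoDup l ->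
  (forall x y, In x l -> In y l -> P x -> P y -> x = y) ->
  sumR (map (fun x => chi (P x)) l) <= 1.
Proof.
  induction l as [|a l IH]; simpl; intros Hnd Huniq; [lra|].
  inversion Hnd as [|? ? Hna Hnd']; subst.
  destruct (classic (P a)) as [Pa|nPa].
  - rewrite chi_true by exact Pa.
    enough (sumR (map (fun x => chi (P x)) l) <= 0) by (unfold sumR in *; lra).
    rewrite <- (Rmult_0_l (INR (length l))), <- sumR_const.
    apply sumR_le; intros x Hx. rewrite chi_false; [lra|].
    intros Px. apply Hna. rewrite (Huniq a x); auto.
  - rewrite chi_false by exact nPa.
    enough (sumR (map (fun x => chi (P x)) l) <= 1) by (unfold sumR in *; lra).
    apply IH; auto.
Qed.

Lemma count_integers_between (x y : R) (M : nat) : 0 <= x ->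
  Rmin (INR M) (x + y) - x - 1 <= sumR (map (fun j => chi (x < INR j < x + y)) (seq 0 M)).
Proof.
  intros Hx; induction M as [|M IH].
  - simpl. unfold Rmin; destruct Rle_dec; lra.
  - rewrite seq_S, map_app, sumR_app, S_INR. simpl (0 + M)%nat. cbn [map sumR fold_right].
    pose proof (sumR_chi_ge0 (fun j => x < INR j < x + y) (seq 0 M)).
    pose proof (chi_ge0 (x < INR M < x + y)).
    pose proof (Rmin_l (INR M + 1) (x + y)).
    destruct (Rle_dec (INR M) x); [lra|].
    destruct (Rlt_dec (INR M) (x + y)).
    + rewrite chi_true by lra. rewrite Rmin_left in IH by lra. lra.
    + rewrite Rmin_right in IH by lra. rewrite Rmin_right by lra. lra.
Qed.

Definition cross (p q : pt) : R := fst p * snd q - snd p * fst q.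
Definition norm (p : pt) : R := sqrt (dot p p).
Definition polar (rho t : R) : pt := (rho * cos t, rho * sin t).

Lemma cross_polar (r s a b : R) : cross (polar r a) (polar s b) = r * s * sin (b - a).
Proof. unfold cross, polar; simpl. rewrite sin_minus. ring. Qed.

Lemma polar_add_2PI (rho t : R) : polar rho (t + 2 * PI) = polar rho t.
Proof. unfold polar. rewrite cos_plus, sin_plus, cos_2PI, sin_2PI. f_equal; ring. Qed.

Lemma unit_circle_angle (x y : R) : x * x + y * y = 1 ->
  exists t, 0 <= t < 2 * PI /\ x = cos t /\ y = sin t.
Proof.
  intros H. pose proof PI_RGT_0.
  assert (Hx : -1 <= x <= 1) by nra.
  assert (Hs : sqrt (1 - x²) = Rabs y).
  { replace (1 - x²) with y² by (unfold Rsqr; lra). apply sqrt_Rsqr_abs. }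
  destruct (Rle_lt_dec 0 y) as [Hy|Hy].
  - exists (acos x). pose proof (acos_bound x).
    rewrite cos_acos, sin_acos, Hs, Rabs_right by lra. repeat split; lra.
  - assert (Hx' : -1 < x < 1) by nra. pose proof (acos_bound_lt x Hx').
    exists (2 * PI - acos x).
    rewrite cos_minus, sin_minus, cos_2PI, sin_2PI, cos_acos, sin_acos, Hs, Rabs_left by lra.
    repeat split; lra.
Qed.

Lemma polar_repr (p : pt) : 0 < dot p p ->
  exists rho t, 0 < rho /\ 0 <= t < 2 * PI /\ p = polar rho t.
Proof.
  destruct p as [a b]; unfold dot; simpl; intros H.
  set (n := sqrt (a * a + b * b)).
  assert (Hn : 0 < n) by (apply sqrt_lt_R0; lra).
  assert (Hn2 : n * n = a * a + b * b) by (apply sqrt_sqrt; lra).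
  destruct (unit_circle_angle (a / n) (b / n)) as [t [Ht [Ha Hb]]].
  { replace (a / n * (a / n) + b / n * (b / n)) with ((a * a + b * b) / (n * n))
      by (field; lra).
    rewrite Hn2. field. lra. }
  exists n, t. repeat split; try lra. unfold polar.
  rewrite <- Ha, <- Hb. f_equal; field; lra.
Qed.

Lemma cross_pos_dot_pos (p q : pt) : 0 < cross p q -> 0 < dot p p /\ 0 < dot q q.
Proof.
  destruct p as [a b], q as [c d]; unfold cross, dot; simpl; intros H.
  split; [destruct (Req_dec a 0), (Req_dec b 0) | destruct (Req_dec c 0), (Req_dec d 0)];
    subst; nra.
Qed.

Lemma cone_polar (p q : pt) : 0 < cross p q ->
  exists rp rq b t, 0 < rp /\ 0 < rq /\ 0 <= b < 2 * PI /\ 0 < t < PI /\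
    p = polar rp b /\ q = polar rq (b + t).
Proof.
  intros Hc. pose proof PI_RGT_0.
  destruct (cross_pos_dot_pos p q Hc) as [Hp Hq].
  destruct (polar_repr p Hp) as [rp [b [Hrp [Hb ->]]]].
  destruct (polar_repr q Hq) as [rq [g [Hrq [Hg ->]]]].
  set (t := if Rlt_dec b g then g - b else g - b + 2 * PI).
  assert (Hpt : polar rq (b + t) = polar rq g).
  { unfold t; destruct Rlt_dec; [f_equal; ring|].
    replace (b + (g - b + 2 * PI)) with (g + 2 * PI) by ring. apply polar_add_2PI. }
  assert (Hsin : 0 < sin t).
  { rewrite <- Hpt, cross_polar in Hc.
    replace (b + t - b) with t in Hc by ring.
    apply (Rmult_lt_reg_l (rp * rq)); [nra | lra]. }
  assert (Ht : 0 < t < PI).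
  { assert (0 <= t <= 2 * PI) by (unfold t; destruct Rlt_dec; lra).
    assert (t <> 0) by (intros E; rewrite E, sin_0 in Hsin; lra).
    destruct (Rlt_le_dec t PI); [lra|].
    pose proof (sin_le_0 t ltac:(lra) ltac:(lra)). lra. }
  exists rp, rq, b, t. rewrite Hpt. repeat split; lra.
Qed.

Definition in_cone (p q d : pt) : Prop := 0 < cross p d /\ 0 < cross d q.

Lemma in_cone_polar (rp rq b t phi : R) : 0 < rp -> 0 < rq -> t < PI ->
  b < phi < b + t -> in_cone (polar rp b) (polar rq (b + t)) (polar 1 phi).
Proof.
  intros Hp Hq Ht Hphi. unfold in_cone. rewrite !cross_polar.
  split; apply Rmult_lt_0_compat; try lra; apply sin_gt_0; lra.
Qed.

(* [2 * N] directions make two full turns, so a cone of opening < PI starting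
   at an angle in [0, 2 PI) is covered without wrapping around. *)
Definition dir (N j : nat) : pt := polar 1 (2 * PI * INR j / INR N).

Lemma norm_polar (rho t : R) : 0 <= rho -> norm (polar rho t) = rho.
Proof.
  intros H. unfold norm, polar, dot; simpl.
  replace (rho * cos t * (rho * cos t) + rho * sin t * (rho * sin t))
    with (rho ^ 2 * (sin t ^ 2 + cos t ^ 2)) by ring.
  rewrite <- !Rsqr_pow2, sin2_cos2, Rsqr_pow2, Rmult_1_r. apply sqrt_pow2, H.
Qed.

Lemma cone_count (p q : pt) (N : nat) : (1 <= N)%nat -> 0 < cross p q ->
  INR N * (cross p q / (norm p * norm q)) / (2 * PI) - 1
  <= sumR (map (fun j => chi (in_cone p q (dir N j))) (seq 0 (2 * N))).
Proof.
  intros HN Hc. pose proof PI_RGT_0.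
  assert (HNr : 1 <= INR N) by (apply (le_INR 1); lia).
  destruct (cone_polar p q Hc) as [rp [rq [b [t [Hrp [Hrq [Hb [Ht [-> ->]]]]]]]]].
  rewrite cross_polar, !norm_polar by lra.
  replace (b + t - b) with t by ring.
  replace (rp * rq * sin t / (rp * rq)) with (sin t) by (field; lra).
  set (x := INR N * b / (2 * PI)). set (y := INR N * t / (2 * PI)).
  assert (Hx : 0 <= x) by (unfold x; apply Rmult_le_pos; [nra | left; apply Rinv_0_lt_compat; lra]).
  pose proof (count_integers_between x y (2 * N) Hx) as Hcount.
  rewrite Rmin_right in Hcount.
  2:{ rewrite mult_INR. unfold x, y. simpl (INR 2).
      replace (INR N * b / (2 * PI) + INR N * t / (2 * PI)) with (INR N * (b + t) / (2 * PI))
        by (field; lra).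
      apply Rmult_le_reg_r with (2 * PI); [lra|].
      unfold Rdiv; rewrite Rmult_assoc, Rinv_l by lra. nra. }
  assert (Hsin : INR N * sin t / (2 * PI) <= y).
  { pose proof (sin_lt_x t ltac:(lra)). unfold y.
    apply Rmult_le_compat_r; [left; apply Rinv_0_lt_compat; lra | nra]. }
  eapply Rle_trans; [|eapply Rle_trans; [exact Hcount|]]; [lra|].
  apply sumR_le; intros j _. apply chi_mono. intros Hj. apply in_cone_polar; try lra.
  assert (Hstep : 0 < 2 * PI / INR N) by (apply Rdiv_lt_0_compat; lra).
  assert (2 * PI * INR j / INR N - b = 2 * PI / INR N * (INR j - x)) by (unfold x; field; lra).
  assert (b + t - 2 * PI * INR j / INR N = 2 * PI / INR N * (x + y - INR j))
    by (unfold x, y; field; lra).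
  split; nra.
Qed.

Lemma open_tri_rotate (a b c z : pt) : open_tri a b c z -> open_tri b c a z.
Proof.
  intros [l1 [l2 [l3 [H1 [H2 [H3 [H4 ->]]]]]]].
  exists l2, l3, l1. repeat split; try lra. f_equal; ring.
Qed.

Lemma open_tri_swap (a b c z : pt) : open_tri a b c z -> open_tri a c b z.
Proof.
  intros [l1 [l2 [l3 [H1 [H2 [H3 [H4 ->]]]]]]].
  exists l1, l3, l2. repeat split; try lra. f_equal; ring.
Qed.

Definition ray_enters (a d : pt) (S : pt -> Prop) : Prop :=
  exists e0, 0 < e0 /\ forall e, 0 < e < e0 -> S (fst a + e * fst d, snd a + e * snd d).

Lemma ray_enters_mono (a d : pt) (S T : pt -> Prop) :
  (forall z, S z -> T z) -> ray_enters a d S -> ray_enters a d T.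
Proof. intros H [e0 [He0 HS]]. exists e0; split; auto. Qed.

Lemma ray_enters_meet (a d : pt) (S T : pt -> Prop) :
  ray_enters a d S -> ray_enters a d T -> exists z, S z /\ T z.
Proof.
  intros [e1 [He1 HS]] [e2 [He2 HT]].
  set (e := Rmin e1 e2 / 2).
  assert (0 < Rmin e1 e2) by (apply Rmin_glb_lt; lra).
  pose proof (Rmin_l e1 e2). pose proof (Rmin_r e1 e2).
  exists (fst a + e * fst d, snd a + e * snd d).
  split; [apply HS | apply HT]; unfold e; lra.
Qed.

(* barycentric coordinates of a + e d are (1 - e (l + m), e l, e m) *)
Lemma ray_enters_open_tri (a b c d : pt) : 0 < orient a b c ->
  in_cone (psub b a) (psub c a) d -> ray_enters a d (open_tri a b c).
Proof.
  destruct a as [a1 a2], b as [b1 b2], c as [c1 c2], d as [d1 d2].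
  unfold in_cone, orient, cross, psub; simpl. intros Ho [Hb Hc].
  set (o := (b1 - a1) * (c2 - a2) - (b2 - a2) * (c1 - a1)) in *.
  set (l := (d1 * (c2 - a2) - d2 * (c1 - a1)) / o).
  set (m := ((b1 - a1) * d2 - (b2 - a2) * d1) / o).
  assert (Hl : 0 < l) by (apply Rdiv_lt_0_compat; lra).
  assert (Hm : 0 < m) by (apply Rdiv_lt_0_compat; lra).
  exists (/ (l + m)). split; [apply Rinv_0_lt_compat; lra|].
  intros e [He1 He2].
  assert (e * (l + m) < 1).
  { apply (Rmult_lt_compat_r (l + m)) in He2; [|lra].
    rewrite Rinv_l in He2 by lra. exact He2. }
  exists (1 - e * l - e * m), (e * l), (e * m).
  repeat split; [nra | nra | nra | ring |].
  unfold l, m, o in *; simpl; f_equal; field; lra.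
Qed.

Definition ray_count (N : nat) (a : pt) (S : pt -> Prop) : R :=
  sumR (map (fun j => chi (ray_enters a (dir N j) S)) (seq 0 (2 * N))).

Lemma ray_count_mono (N : nat) (a : pt) (S T : pt -> Prop) :
  (forall z, S z -> T z) -> ray_count N a S <= ray_count N a T.
Proof.
  intros H. apply sumR_le; intros j _. apply chi_mono, ray_enters_mono, H.
Qed.

Lemma ray_count_disjoint_sum {A : Type} (N : nat) (a : pt) (S : A -> pt -> Prop) (l : list A) :
  NoDup l -> (forall x y, x <> y -> forall z, ~ (S x z /\ S y z)) ->
  sumR (map (fun x => ray_count N a (S x)) l) <= 2 * INR N.
Proof.
  intros Hnd Hdisj. unfold ray_count. rewrite sumR_comm.
  replace (2 * INR N) with (1 * INR (length (seq 0 (2 * N))))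
    by (rewrite length_seq, mult_INR; simpl; ring).
  rewrite <- sumR_const. apply sumR_le; intros j _.
  apply sumR_chi_le_1; auto. intros x y _ _ Hx Hy.
  destruct (classic (x = y)) as [|Hxy]; auto.
  destruct (ray_enters_meet _ _ _ _ Hx Hy) as [z Hz]. destruct (Hdisj x y Hxy z Hz).
Qed.

Definition sin_corner (a b c : pt) : R :=
  Rabs (orient a b c) / (norm (psub b a) * norm (psub c a)).

Lemma sin_corner_swap (a b c : pt) : sin_corner a c b = sin_corner a b c.
Proof.
  unfold sin_corner. replace (orient a c b) with (- orient a b c) by (unfold orient; ring).
  rewrite Rabs_Ropp, Rmult_comm. reflexivity.
Qed.

Lemma ray_count_ge_sin_corner_pos (N : nat) (a b c : pt) : (1 <= N)%nat ->
  0 < orient a b c -> INR N * sin_corner a b c / (2 * PI) - 1 <= ray_count N a (open_tri a b c).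
Proof.
  intros HN Ho. unfold sin_corner. rewrite Rabs_right by lra.
  eapply Rle_trans; [apply (cone_count (psub b a) (psub c a) N HN Ho)|].
  apply sumR_le; intros j _. apply chi_mono, ray_enters_open_tri, Ho.
Qed.

Lemma ray_count_ge_sin_corner (N : nat) (a b c : pt) : (1 <= N)%nat ->
  orient a b c <> 0 -> INR N * sin_corner a b c / (2 * PI) - 1 <= ray_count N a (open_tri a b c).
Proof.
  intros HN Ho. destruct (Rlt_le_dec 0 (orient a b c)).
  - apply ray_count_ge_sin_corner_pos; auto.
  - rewrite <- sin_corner_swap.
    eapply Rle_trans; [apply ray_count_ge_sin_corner_pos; auto|].
    + unfold orient in *; lra.
    + apply ray_count_mono, open_tri_swap.
Qed.

Lemma cosh_ln_sub (a b : R) : 0 < a -> 0 < b -> cosh (ln b - ln a) = (b / a + a / b) / 2.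
Proof.
  intros Ha Hb. unfold cosh.
  assert (E : exp (ln b - ln a) = b / a).
  { unfold Rminus. rewrite exp_plus, exp_Ropp, !exp_ln by lra. reflexivity. }
  rewrite exp_Ropp, E. f_equal. f_equal. field. lra.
Qed.

Lemma dist2_sym (a b : pt) : dist2 a b = dist2 b a.
Proof. unfold dist2, dot, psub; simpl; ring. Qed.

Lemma kite_triangle (A B W : pt) (R0 R2 al : R) :
  dist2 B A = R0 ^ 2 -> dist2 B W = R2 ^ 2 -> dot (psub A B) (psub W B) = R0 * R2 * cos al ->
  0 < R0 -> 0 < R2 -> 0 < sin al ->
  Rabs (orient A B W) = R0 * R2 * sin al /\
  dist2 A W = R0 ^ 2 + R2 ^ 2 - 2 * R0 * R2 * cos al.
Proof.
  destruct A as [a1 a2], B as [b1 b2], W as [w1 w2].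
  unfold dist2, dot, psub, orient; cbn [fst snd]. intros E1 E2 E3 H0 H2 Hs.
  split; [|nra].
  set (o := (b1 - a1) * (w2 - a2) - (b2 - a2) * (w1 - a1)).
  (* Lagrange's identity for the vectors A - B and W - B *)
  assert (Lag : o * o + (R0 * R2 * cos al) * (R0 * R2 * cos al) = R0 ^ 2 * R2 ^ 2).
  { rewrite <- E3, <- E1, <- E2. unfold o. ring. }
  pose proof (sin2_cos2 al) as Ec. unfold Rsqr in Ec.
  assert (Rabs o * Rabs o = (R0 * R2 * sin al) * (R0 * R2 * sin al)).
  { rewrite <- Rabs_mult, Rabs_right by nra. nra. }
  pose proof (Rabs_pos o).
  assert (0 < R0 * R2 * sin al) by (apply Rmult_lt_0_compat; [nra | lra]).
  nra.
Qed.

Lemma sqr_sin_le_law_of_cosines (R0 R2 al a0 : R) : 0 < R0 -> 0 < R2 ->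
  0 < a0 <= PI / 2 -> a0 <= al < PI ->
  R0 ^ 2 * sin a0 ^ 2 <= R0 ^ 2 + R2 ^ 2 - 2 * R0 * R2 * cos al.
Proof.
  intros H0 H2 Ha0 Hal. pose proof PI_RGT_0.
  pose proof (sin2_cos2 al) as E. unfold Rsqr in E.
  pose proof (SIN_bound a0).
  destruct (Rle_dec (cos al) 0).
  - assert (sin a0 ^ 2 <= 1) by nra.
    assert (0 <= R0 * R2 * - cos al) by (apply Rmult_le_pos; nra). nra.
  - assert (al < PI / 2).
    { destruct (Rlt_le_dec al (PI / 2)); [assumption|].
      pose proof (cos_le_0 al ltac:(lra) ltac:(lra)). lra. }
    assert (sin a0 <= sin al) by (apply sin_incr_1; lra).
    assert (0 <= sin a0) by (apply sin_ge_0; lra).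
    assert (R0 ^ 2 + R2 ^ 2 - 2 * R0 * R2 * cos al
            = (R2 - R0 * cos al) ^ 2 + R0 ^ 2 * sin al ^ 2) by nra.
    assert (sin a0 ^ 2 <= sin al ^ 2) by nra.
    assert (0 <= R0 ^ 2 * (sin al ^ 2 - sin a0 ^ 2)) by (apply Rmult_le_pos; nra).
    pose proof (pow2_ge_0 (R2 - R0 * cos al)). lra.
Qed.

Lemma kite_conductance_le (A B W : pt) (R0 R2 al a0 : R) :
  dist2 B A = R0 ^ 2 -> dist2 B W = R2 ^ 2 -> dot (psub A B) (psub W B) = R0 * R2 * cos al ->
  0 < R0 -> 0 < R2 -> 0 < a0 <= PI / 2 -> a0 <= al < PI ->
  sin al / (cosh (ln R2 - ln R0) - cos al) <= 2 / sin a0 * sin_corner A B W.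
Proof.
  intros E1 E2 E3 H0 H2 Ha0 Hal. pose proof PI_RGT_0.
  assert (Hsa0 : 0 < sin a0) by (apply sin_gt_0; lra).
  assert (Hsal : 0 < sin al) by (apply sin_gt_0; lra).
  destruct (kite_triangle A B W R0 R2 al E1 E2 E3 H0 H2 Hsal) as [Ho HD].
  pose proof (sqr_sin_le_law_of_cosines R0 R2 al a0 H0 H2 Ha0 Hal) as Hlb.
  rewrite <- HD in Hlb.
  set (D := dist2 A W) in *. set (t := sqrt D).
  assert (HDpos : 0 < D) by (assert (0 < R0 ^ 2 * sin a0 ^ 2) by (apply Rmult_lt_0_compat;
    apply pow_lt; lra); lra).
  assert (Ht : 0 < t) by (apply sqrt_lt_R0; lra).
  assert (Ht2 : t * t = D) by (apply sqrt_sqrt; lra).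
  assert (Hclose : R0 * sin a0 <= t).
  { apply Rsqr_incr_0_var; [unfold Rsqr; nra | lra]. }
  assert (Hsin : sin_corner A B W = R2 * sin al / t).
  { unfold sin_corner, norm. fold (dist2 B A) (dist2 W A).
    rewrite Ho, E1, sqrt_pow2 by lra.
    rewrite dist2_sym.
    fold D t. field. lra. }
  rewrite cosh_ln_sub by lra. rewrite Hsin.
  replace ((R2 / R0 + R0 / R2) / 2 - cos al) with (t * t / (2 * R0 * R2))
    by (rewrite Ht2, HD; field; lra).
  replace (sin al / (t * t / (2 * R0 * R2))) with (2 * R2 * sin al / t * (R0 / t))
    by (field; lra).
  replace (2 / sin a0 * (R2 * sin al / t)) with (2 * R2 * sin al / t * / sin a0) by (field; lra).
  apply Rmult_le_compat_l; [apply Rmult_le_pos; [nra | left; apply Rinv_0_lt_compat, Ht]|].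
  apply Rmult_le_reg_r with (t * sin a0); [nra|].
  replace (R0 / t * (t * sin a0)) with (R0 * sin a0) by (field; lra).
  replace (/ sin a0 * (t * sin a0)) with t by (field; lra). exact Hclose.
Qed.

Section Pattern.

Variables (V F : Type) (white : V -> bool) (fv : F -> corner -> V)
  (pos : V -> pt) (r : V -> R) (alpha : F -> R) (alpha0 : R).
Hypothesis Halpha0 : 0 < alpha0 <= PI / 2.
Hypothesis Hbquad : is_bquad_graph white fv.
Hypothesis Hadm : admissible white fv alpha0 alpha.
Hypothesis Hpattern : circle_pattern white fv alpha pos r.

Lemma face_conductance_le_sin_corner (f : F) (i : corner) :
  white (fv f i) = true ->
  exists b c, orient (pos (fv f i)) b c <> 0 /\
    (forall z, open_tri (pos (fv f i)) b c z -> open_kite fv pos f z) /\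
    conductance fv alpha r f <= 2 / sin alpha0 * sin_corner (pos (fv f i)) b c.
Proof.
  intros Hw.
  destruct Hbquad as [Hcol _]. destruct (Hcol f) as [Hw0 [Hw2 [Hb1 Hb3]]].
  destruct Hadm as [Hal _]. destruct Hpattern as [Hr [Hcirc [s [Hs Hor]]]].
  destruct (Hcirc f (fv f Defs.c1) (or_introl eq_refl)) as [E1 [E2 E3]].
  set (A := pos (fv f c0)) in *. set (B := pos (fv f Defs.c1)) in *. set (W := pos (fv f c2)) in *.
  assert (HR0 : 0 < r (fv f c0)) by auto.
  assert (HR2 : 0 < r (fv f c2)) by auto.
  assert (Ho : orient A B W <> 0).
  { destruct (Hor f) as [Ho _]. fold A B W in Ho. intros E. rewrite E in Ho. lra. }
  unfold conductance.
  destruct i; [| rewrite Hb1 in Hw; discriminate | | rewrite Hb3 in Hw; discriminate].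
  - fold A. exists B, W. repeat split; [exact Ho | intros z Hz; left; exact Hz |].
    apply (kite_conductance_le A B W); auto.
  - fold W. exists B, A. repeat split.
    + replace (orient W B A) with (- orient A B W) by (unfold orient; ring).
      intros E; apply Ho; lra.
    + intros z Hz. left. apply open_tri_swap, open_tri_rotate, open_tri_rotate, Hz.
    + rewrite cosh_ln_sub, Rplus_comm, <- cosh_ln_sub by auto.
      apply (kite_conductance_le W B A _ _ _ _ E2 E1); auto.
      replace (dot (psub W B) (psub A B)) with (dot (psub A B) (psub W B))
        by (unfold dot; ring).
      rewrite E3. ring.
Qed.

Lemma conductance_le_ray_count (f : F) (v : V) (N : nat) : (1 <= N)%nat ->
  white v = true -> (exists i, fv f i = v) ->
  conductance fv alpha r f <=
    4 * PI / (INR N * sin alpha0) * (ray_count N (pos v) (open_kite fv pos f) + 1).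
Proof.
  intros HN Hw [i <-]. pose proof PI_RGT_0.
  assert (HNr : 1 <= INR N) by (apply (le_INR 1); lia).
  assert (Hsa0 : 0 < sin alpha0) by (apply sin_gt_0; lra).
  destruct (face_conductance_le_sin_corner f i Hw) as [b [c [Ho [Hsub Hle]]]].
  pose proof (ray_count_ge_sin_corner N _ _ _ HN Ho) as Hcount.
  pose proof (ray_count_mono N (pos (fv f i)) _ _ Hsub).
  set (k := ray_count N (pos (fv f i)) (open_kite fv pos f)) in *.
  set (s := sin_corner (pos (fv f i)) b c) in *.
  eapply Rle_trans; [exact Hle|].
  replace (4 * PI / (INR N * sin alpha0) * (k + 1))
    with (2 / sin alpha0 * (2 * PI / INR N * (k + 1))) by (field; lra).
  apply Rmult_le_compat_l; [left; apply Rdiv_lt_0_compat; lra|].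
  apply Rmult_le_reg_l with (INR N / (2 * PI)); [apply Rdiv_lt_0_compat; lra|].
  replace (INR N / (2 * PI) * (2 * PI / INR N * (k + 1))) with (k + 1) by (field; lra).
  replace (INR N / (2 * PI) * s) with (INR N * s / (2 * PI)) by (field; lra).
  lra.
Qed.

End Pattern.

Theorem lemma5p11 :
  forall alpha0 : R, 0 < alpha0 <= PI / 2 ->
  exists C5 : R,
    forall (V F : Type) (white : V -> bool) (fv : F -> corner -> V)
           (pos : V -> pt) (r : V -> R) (alpha : F -> R),
      is_bquad_graph white fv ->
      admissible white fv alpha0 alpha ->
      circle_pattern white fv alpha pos r ->
      embedded fv pos ->
      forall (v : V) (fs : list F) (ys : list V),
        white v = true -> star fv v fs ys ->
        sumR (map (conductance fv alpha r) fs) <= C5.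
Proof.
  intros alpha0 Ha0. exists (12 * PI / sin alpha0).
  intros V F white fv pos r alpha Hbq Hadm Hcp Hemb v fs ys Hw Hstar.
  pose proof PI_RGT_0. assert (Hsa0 : 0 < sin alpha0) by (apply sin_gt_0; lra).
  destruct Hstar as [Hlen [_ [Hnd [_ [_ Hnth]]]]].
  set (N := length fs) in *.
  assert (HNr : 1 <= INR N) by (apply (le_INR 1); lia).
  set (K := 4 * PI / (INR N * sin alpha0)).
  set (cnt := fun f => ray_count N (pos v) (open_kite fv pos f)).
  assert (Hface : forall f, In f fs -> conductance fv alpha r f <= K * (cnt f + 1)).
  { intros f Hf. apply (conductance_le_ray_count V F white fv pos r alpha alpha0); auto.
    destruct (In_nth_error fs f Hf) as [k Hk]. destruct (Hnth k f Hk) as [i [Hi _]].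
    exists i; exact Hi. }
  assert (Hdisj : sumR (map cnt fs) <= 2 * INR N).
  { apply ray_count_disjoint_sum; auto. intros f g Hfg. apply (Hemb f g Hfg). }
  eapply Rle_trans; [apply (sumR_le _ _ _ Hface)|].
  rewrite sumR_scal, sumR_add, sumR_const. fold N.
  apply Rle_trans with (K * (2 * INR N + 1 * INR N)).
  - apply Rmult_le_compat_l; [left; apply Rdiv_lt_0_compat; nra | lra].
  - unfold K. right. field. lra.
Qed.
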